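(* Let $\Gamma$ be a finite abelian group, $\sigma\colon\Gamma\times\Gamma\to\mathbb{C}^\times$ a symmetric nondegenerate bimultiplicative form, $\varepsilon\in\{\pm1\}$, $q\colon\Gamma\to\mathbb{C}^\times$ a quadratic form with $\sigma(a,b)=q(a+b)q(a)^{-1}q(b)^{-1}$, $\alpha\in\mathbb{C}$ with $\alpha^2=\varepsilon|\Gamma|^{-1/2}\sum_{a\in\Gamma}q(a)^{-1}$, and $\beta\in\{\alpha^{-1},-\alpha^{-1}\}$. Consider the $\mathbb{Z}_2$-crossed ribbon fusion category $\mathcal{TY}(\Gamma,\sigma,\varepsilon\,|\,q,\alpha,\beta)$ described in the context. Then the quantum dimensions of all simple objects of $\mathcal{TY}(\Gamma,\sigma,\varepsilon\,|\,q,\alpha,\beta)$ coincide with their Frobenius–Perron dimensions if and only if $\alpha\beta=\varepsilon$.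
   Context: The Tambara–Yamagami category $\mathcal{TY}(\Gamma,\sigma,\varepsilon)$ is the semisimple $\mathbb{Z}_2$-graded fusion category $\operatorname{Vect}_\Gamma\oplus\operatorname{Vect}$ with simple objects $\mathbb{C}_a$ ($a\in\Gamma$, degree $0$) and $\mathsf{X}$ (degree $1$), fusion rules $\mathbb{C}_a\otimes\mathbb{C}_b=\mathbb{C}_{a+b}$, $\mathbb{C}_a\otimes\mathsf{X}=\mathsf{X}\otimes\mathbb{C}_a=\mathsf{X}$, $\mathsf{X}\otimes\mathsf{X}=\bigoplus_{t\in\Gamma}\mathbb{C}_t$, and with the only nontrivial associators: $(\mathbb{C}_a\otimes\mathsf{X})\otimes\mathbb{C}_b\to\mathbb{C}_a\otimes(\mathsf{X}\otimes\mathbb{C}_b)$ is the scalar $\sigma(a,b)$; $(\mathsf{X}\otimes\mathbb{C}_a)\otimes\mathsf{X}\to\mathsf{X}\otimes(\mathbb{C}_a\otimes\mathsf{X})$ is $\sigma(a,t)$ on the summand $\mathbb{C}_t$; $(\mathsf{X}\otimes\mathsf{X})\otimes\mathsf{X}=\bigoplus_{t\in\Gamma}\mathsf{X}\to\bigoplus_{r\in\Gamma}\mathsf{X}=\mathsf{X}\otimes(\mathsf{X}\otimes\mathsf{X})$ is the matrix with entries $\varepsilon|\Gamma|^{-1/2}\sigma(t,r)^{-1}$. Rigid structure: $\mathbb{C}_a^*=\mathbb{C}_{-a}$ with obvious (co)evaluations, $\mathsf{X}^*=\mathsf{X}$, $\mathrm{coev}_\mathsf{X}$ the inclusion of $\mathbb{C}_0$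 into $\mathsf{X}\otimes\mathsf{X}$, $\mathrm{ev}_\mathsf{X}=\varepsilon|\Gamma|^{1/2}$ times the projection onto $\mathbb{C}_0$. The group $\mathbb{Z}_2=\langle g\rangle$ acts strictly by $g_*\mathbb{C}_a=\mathbb{C}_{-a}$, $g_*\mathsf{X}=\mathsf{X}$ with trivial tensor and composition structures. The $\mathbb{Z}_2$-crossed braiding is $c_{\mathbb{C}_a,\mathbb{C}_b}=\sigma(a,b)$, $c_{\mathbb{C}_a,\mathsf{X}}=q(a)^{-1}$, $c_{\mathsf{X},\mathbb{C}_a}\colon\mathsf{X}\otimes\mathbb{C}_a\to\mathbb{C}_{-a}\otimes\mathsf{X}$ equal to $q(a)^{-1}$, and $c_{\mathsf{X},\mathsf{X}}=\alpha\,q(t)$ on the summand $\mathbb{C}_t$. The $\mathbb{Z}_2$-ribbon twist is $\theta_{\mathbb{C}_a}=q(a)^2$, $\theta_\mathsf{X}=\beta$. These data define the $\mathbb{Z}_2$-crossed ribbon category $\mathcal{TY}(\Gamma,\sigma,\varepsilon\,|\,q,\alpha,\beta)$. The quantum dimension of a simple object $Y$ is $\mathrm{ev}_Y\circ c_{Y,Y^*}\circ(\theta_Y\otimes\mathrm{id}_{Y^*})\circ\mathrm{coev}_Y$. The Frobenius–Perron dimensions are $1$ for each $\mathbb{C}_a$ and $|\Gamma|^{1/2}$ for $\mathsf{X}$. *)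

From mathcomp Require Import all_boot all_order all_algebra all_field.
Set Implicit Arguments. Unset Strict Implicit. Unset Printing Implicit Defensive.
Import Order.TTheory GRing.Theory Num.Theory.
Local Open Scope ring_scope.

(* Simple objects of TY(Gamma, sigma, eps | q, alpha, beta):
   C_a (a in Gamma, degree 0) and X (degree 1). *)
Inductive TYsimple (G : Type) : Type :=
| TYC : G -> TYsimple G
| TYX : TYsimple G.
Arguments TYX {G}.

Section TY.
Variable G : finZmodType.

Definition sqrt_card : algC := sqrtC (#|G|%:R).

Definition sym_bicharacter (sigma : G -> G -> algC) :=
  forall a b, sigma a b = sigma b a.
Definition bimultiplicative_form (sigma : G -> G -> algC) :=
  (forall a b c, sigma (a + b) c = sigma a c * sigma b c) /\
  (forall a b c, sigma a (b + c) = sigma a b * sigma a c).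
Definition nondegenerate_form (sigma : G -> G -> algC) :=
  forall a, (forall b, sigma a b = 1) -> a = 0.
Definition quadratic_form_for (sigma : G -> G -> algC) (q : G -> algC) :=
  (forall a, q a != 0) /\ (forall a, q (- a) = q a) /\
  (forall a b, sigma a b = q (a + b) / (q a * q b)).

Variables (sigma : G -> G -> algC) (q : G -> algC) (eps alpha beta : algC).

Definition TY_dual (Y : TYsimple G) : TYsimple G :=
  match Y with TYC a => TYC (- a) | TYX => TYX end.

Definition TY_twist (Y : TYsimple G) : algC :=
  match Y with TYC a => q a ^+ 2 | TYX => beta end.

(* Morphisms are written in coordinates w.r.t. the simple summands.
   C_a (x) C_{-a} = C_0 has a single summand; X (x) X = (+)_{t in Gamma} C_t
   and a morphism between 1 = C_0 and X (x) X, or an endomorphism of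
   X (x) X preserving the decomposition, is a family of scalars indexed by t. *)

Definition coev_C (a : G) : algC := 1.
Definition ev_C (a : G) : algC := 1.
Definition coev_X (t : G) : algC := (t == 0)%:R.
Definition ev_X (t : G) : algC := eps * sqrt_card * (t == 0)%:R.
Definition braid_CC (a b : G) : algC := sigma a b.
Definition braid_XX (t : G) : algC := alpha * q t.

(* quantum dimension: ev_Y o c_{Y,Y^*} o (theta_Y (x) id_{Y^*}) o coev_Y *)
Definition TY_qdim (Y : TYsimple G) : algC :=
  match Y with
  | TYC a => ev_C a * (braid_CC a (- a) * (TY_twist (TYC a) * coev_C a))
  | TYX => \sum_(t : G) ev_X t * (braid_XX t * (TY_twist TYX * coev_X t))
  end.

End TY.

Definition TY_FPdim (G : finZmodType) (Y : TYsimple G) : algC :=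
  match Y with TYC _ => 1 | TYX => sqrt_card G end.

From mathcomp Require Import all_boot all_order all_algebra algC.
Set Implicit Arguments. Unset Strict Implicit. Unset Printing Implicit Defensive.
Import Order.TTheory GRing.Theory Num.Theory.
Local Open Scope ring_scope.

(* The quantum dimension of C_a is sigma(a,-a) q(a)^2 = q(0) = 1, so only X
   matters.  For X, coev_X and ev_X both factor through the summand C_0 of
   X (x) X, where the braiding is alpha q(0) = alpha; hence
   qdim X = eps |Gamma|^(1/2) alpha beta, which is |Gamma|^(1/2) iff
   alpha beta = eps since eps^2 = 1. *)

Section QuadraticForm.
Variables (G : finZmodType) (sigma : G -> G -> algC) (q : G -> algC).
Hypothesis sigma_neq0 : forall a b, sigma a b != 0.
Hypothesis sigmaDl : forall a b c, sigma (a + b) c = sigma a c * sigma b c.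
Hypothesis q_quadratic : quadratic_form_for sigma q.

Lemma sigma0l (c : G) : sigma 0 c = 1.
Proof.
apply: (mulfI (sigma_neq0 0 c)).
by rewrite mulr1 -sigmaDl addr0.
Qed.

Lemma quadratic_form0 : q 0 = 1.
Proof.
have [q_neq0 [_ sigmaE]] := q_quadratic.
have := sigmaE 0 0; rewrite sigma0l addr0 invfM mulrA divff // mul1r => q0V.
by rewrite -[q 0]invrK -q0V invr1.
Qed.

Lemma TY_qdimC (eps alpha beta : algC) (a : G) :
  TY_qdim sigma q eps alpha beta (TYC a) = 1.
Proof.
have [q_neq0 [qN sigmaE]] := q_quadratic.
rewrite /= /ev_C /braid_CC /coev_C sigmaE subrr quadratic_form0 qN !mul1r mulr1.
by rewrite mulrC -expr2 -exprVn -exprMn divff // expr1n.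
Qed.

Lemma TY_qdimX (eps alpha beta : algC) :
  TY_qdim sigma q eps alpha beta TYX = eps * sqrt_card G * (alpha * beta).
Proof.
rewrite /= (bigD1 0) //= big1 ?addr0.
  by rewrite /ev_X /braid_XX /coev_X eqxx quadratic_form0 !mulr1 mulrA.
by move=> t /negbTE t_neq0; rewrite /ev_X /coev_X t_neq0 !(mulr0, mul0r).
Qed.

End QuadraticForm.

Lemma sqrt_card_neq0 (G : finZmodType) : sqrt_card G != 0.
Proof.
by rewrite /sqrt_card sqrtC_eq0 pnatr_eq0 -lt0n; apply/card_gt0P; exists 0.
Qed.

Lemma sign_mulr_eq1 (eps x : algC) :
  eps = 1 \/ eps = -1 -> (eps * x = 1) <-> (x = eps).
Proof.
case=> ->; first by rewrite mul1r.
by rewrite mulN1r; split=> [/(canRL (@opprK _))|->]; rewrite ?opprK.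
Qed.

Theorem proposition3p7 (G : finZmodType) (sigma : G -> G -> algC)
  (q : G -> algC) (eps alpha beta : algC) :
  (forall a b, sigma a b != 0) ->
  sym_bicharacter sigma -> bimultiplicative_form sigma -> nondegenerate_form sigma ->
  (eps = 1 \/ eps = -1) ->
  quadratic_form_for sigma q ->
  alpha ^+ 2 = eps * (sqrt_card G)^-1 * \sum_(a : G) (q a)^-1 ->
  (beta = alpha^-1 \/ beta = - alpha^-1) ->
  ((forall Y : TYsimple G,
      TY_qdim sigma q eps alpha beta Y = TY_FPdim Y)
   <-> alpha * beta = eps).
Proof.
move=> sigma_neq0 _ [sigmaDl _] _ eps_sign q_quadratic _ _.
have qdimX := TY_qdimX sigma_neq0 sigmaDl q_quadratic eps alpha beta.
have qdimX_FP : (eps * sqrt_card G * (alpha * beta) = sqrt_card G)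
                <-> (alpha * beta = eps).
  have sign_eq1 := sign_mulr_eq1 (alpha * beta) eps_sign.
  rewrite mulrAC -[RHS in _ = RHS]mul1r.
  by split=> [/(mulIf (sqrt_card_neq0 G))/sign_eq1 | /sign_eq1 ->].
split=> [/(_ TYX) | ab_eq [a|]].
- by rewrite qdimX /= => /qdimX_FP.
- exact: (TY_qdimC sigma_neq0 sigmaDl q_quadratic).
- by rewrite qdimX; apply/qdimX_FP.
Qed.
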